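(* Let $r$ be a positive integer. Then $\omega(n)\to\infty$ as $n\to\infty$ through elements of $F_r$.
   Context: For a positive integer $r$, $S_r$ is the multiplicative arithmetic function with $S_r(p^{\alpha})=0$ if $p\leq r$ and $S_r(p^{\alpha})=p^{\alpha-1}(p-r)$ if $p>r$, for all primes $p$ and positive integers $\alpha$. $B_r=\{n\in\mathbb{N}: S_r(n)>0\}$ (positive integers whose smallest prime factor exceeds $r$, together with $1$). $F_r$ is the set of $n\in B_r$ such that $S_r(n)<S_r(m)$ for all $m\in B_r$ with $m>n$. $\omega(n)$ is the number of distinct prime factors of $n$. *)

From mathcomp Require Import all_boot.
Set Implicit Arguments. Unset Strict Implicit. Unset Printing Implicit Defensive.

Definition Sr (r n : nat) : nat :=
  \prod_(p <- primes n)
     (if r < p then p ^ (logn p n).-1 * (p - r) else 0).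

Definition inB (r n : nat) : Prop := 0 < n /\ 0 < Sr r n.

Definition inF (r n : nat) : Prop :=
  inB r n /\ forall m, inB r m -> n < m -> Sr r n < Sr r m.

Definition omega (n : nat) : nat := size (primes n).

(* Every n in B_r satisfies n <= (r+1)^omega(n) S_r(n).  Because the sum of 1/p over
   primes diverges, there is a finite set T of primes above r with
   prod_{p in T} (p-1)/p as small as we like.  Given n in F_r with omega(n) < K, put
   P = prod T, fix a prime q > r and take the least m = P q^(j+1) exceeding n.  Then
   m <= q n lies in B_r and S_r(m) <= m prod_{p in T} (p-r)/p < n/(r+1)^K <= S_r(n),
   contradicting S_r(n) < S_r(m) once n is large. *)

From mathcomp Require Import all_boot zify all_order all_algebra ring lra.
Set Implicit Arguments. Unset Strict Implicit. Unset Printing Implicit Defensive.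
Import Order.TTheory GRing.Theory Num.Theory.

Lemma prod_primes_logn n : 0 < n -> n = \prod_(p <- primes n) p ^ logn p n.
Proof. by move=> n_gt0; rewrite {1}(prod_prime_decomp n_gt0) prime_decompE big_map. Qed.

Lemma Sr_gt0 r n : (0 < Sr r n) = all (fun p => r < p) (primes n).
Proof.
apply/idP/allP => [Sr_gt0 p pn | r_lt].
  by have := gt0_prodn_seq Sr_gt0 p pn isT; case: ifP.
rewrite /Sr big_seq; apply: prodn_cond_gt0 => p pn.
rewrite r_lt // muln_gt0 expn_gt0 subn_gt0 r_lt // andbT.
by move: pn; rewrite mem_primes => /andP[/prime_gt0 ->].
Qed.

Lemma inB_primes r n : inB r n -> {in primes n, forall p, r < p /\ 0 < logn p n}.
Proof. by case=> _; rewrite Sr_gt0 => /allP r_lt p pn; rewrite r_lt ?logn_gt0. Qed.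

Lemma leq_Sr_omega r n : inB r n -> n <= r.+1 ^ omega n * Sr r n.
Proof.
move=> Bn; rewrite {1}(prod_primes_logn Bn.1) /omega /Sr.
rewrite -[size _]count_predT -iter_muln_1 -big_const_seq -big_split /=.
rewrite !big_seq; apply: leq_prod => p /(inB_primes Bn) [r_lt /prednK <-] /=.
have p_le : p <= r.+1 * (p - r) by nia.
by rewrite r_lt expnS mulnCA [_ ^ _ * _]mulnC leq_mul.
Qed.

Lemma perm_primes_split n T : uniq T -> {subset T <= primes n} ->
  perm_eq (primes n) (T ++ [seq p <- primes n | p \notin T]).
Proof.
move=> uT sT; rewrite -(perm_filterC (mem T)) perm_cat2r.
apply: uniq_perm; rewrite ?filter_uniq ?primes_uniq // => p.
by rewrite mem_filter; apply/andP/idP => [[] // | pT]; split; last exact: sT.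
Qed.

Lemma Sr_mul_prod_leq r n T : 0 < n -> uniq T -> {subset T <= primes n} ->
  Sr r n * \prod_(p <- T) p <= n * \prod_(p <- T) (p - r).
Proof.
move=> n_gt0 uT sT; have [-> // | Sr_gt0] := posnP (Sr r n).
have Bn : inB r n by [].
rewrite {2}(prod_primes_logn n_gt0) /Sr.
rewrite !(perm_big _ (perm_primes_split uT sT)) !big_cat /= mulnAC [X in _ <= X]mulnAC.
apply: leq_mul; rewrite -?big_split !big_seq /=; apply: leq_prod => p.
- move/sT/(inB_primes Bn) => [-> /prednK <-].
  by rewrite /= expnSr mulnAC.
- rewrite mem_filter => /andP[_ /(inB_primes Bn) [-> /prednK <-]].
  by rewrite expnS mulnC leq_mul2r leq_subr orbT.
Qed.

Lemma Sr_ltn r n m c T : inB r n -> 0 < m -> m <= c * n ->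
    uniq T -> {subset T <= primes m} ->
    c * r.+1 ^ omega n * \prod_(p <- T) (p - r) < \prod_(p <- T) p ->
  Sr r m < Sr r n.
Proof.
move=> Bn m_gt0 le_m_cn uT sT dense.
have le_Srm := Sr_mul_prod_leq r m_gt0 uT sT; have le_n := leq_Sr_omega Bn.
move: dense le_Srm le_n Bn.2; set D := \prod_(_ <- _) _; set P := \prod_(_ <- _) _.
move: (r.+1 ^ _) (Sr r m) (Sr r n) => Q Sm Sn dense le_Srm le_n Sn_gt0.
have lt_P : Sm * P < Sn * P.
  apply: leq_ltn_trans le_Srm _; apply: leq_ltn_trans (_ : m * D <= c * (Q * Sn) * D) _.
    by rewrite leq_mul // (leq_trans le_m_cn) // leq_mul2l le_n orbT.
  have -> : c * (Q * Sn) * D = Sn * (c * Q * D) by ring.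
  by rewrite ltn_pmul2l.
by rewrite ltn_pmul2r // in lt_P; apply: leq_ltn_trans dense.
Qed.

Lemma sum_dvdn_nat p X : 0 < p -> \sum_(1 <= x < X.+1) (p %| x) = X %/ p.
Proof.
move=> p_gt0; elim: X => [|X IH]; first by rewrite big_geq // div0n.
by rewrite big_nat_recr //= IH divnS // addnC.
Qed.

Definition smooth k x := all (fun p => p < k) (primes x).

(* Every x <= X is either k-smooth or divisible by a prime in [k, X]. *)
Lemma leq_sum_div_primes_smooth k X :
  X <= \sum_(k <= p < X.+1 | prime p) X %/ p + \sum_(1 <= x < X.+1) smooth k x.
Proof.
have -> : \sum_(k <= p < X.+1 | prime p) X %/ p =
    \sum_(1 <= x < X.+1) \sum_(k <= p < X.+1 | prime p) (p %| x).
  by rewrite exchange_big_nat /=; apply: eq_bigr => p /prime_gt0 /sum_dvdn_nat.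
have {1}-> : X = \sum_(1 <= x < X.+1) 1 by rewrite sum_nat_const_nat muln1 subn1.
rewrite -big_split /= !big_seq; apply: leq_sum => x; rewrite mem_index_iota => /andP[x_gt0 x_le].
case sm: (smooth k x); first by rewrite addn1.
rewrite addn0 lt0n sum_nat_seq_neq0.
move/negbT: sm; rewrite /smooth -has_predC => /hasP [p px /= p_ge].
move: px; rewrite mem_primes => /and3P[p_pr _ p_dvd]; apply/hasP; exists p => //.
  by rewrite mem_index_iota leqNgt p_ge (leq_ltn_trans (dvdn_leq x_gt0 p_dvd)).
by rewrite p_pr p_dvd.
Qed.

Lemma logn_leq_exp2 p x e : 0 < x -> x <= 2 ^ e -> logn p x <= e.
Proof.
move=> x_gt0 le_x; have [px | ] := boolP (p \in primes x); last first.
  by rewrite -logn_gt0 lt0n negbK => /eqP ->.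
have p_gt1 : 1 < p by move: px; rewrite mem_primes => /andP[/prime_gt1].
rewrite -(@leq_exp2l 2) //; apply: leq_trans le_x.
apply: leq_trans (dvdn_leq x_gt0 (pfactor_dvdnn p x)).
by rewrite leq_exp2r ?logn_gt0.
Qed.

(* A k-smooth x <= 2^e is determined by its exponents at the primes below k, each
   at most e. *)
Lemma sum_smooth_leq k X e : X <= 2 ^ e ->
  \sum_(1 <= x < X.+1) smooth k x <= e.+1 ^ k.
Proof.
move=> le_X.
have -> : \sum_(1 <= x < X.+1) smooth k x =
    #|[pred i : 'I_X.+1 | (0 < i) && smooth k i]|.
  rewrite -sum1_card.
  transitivity (\sum_(0 <= i < X.+1) ((0 < i) && smooth k i)).
    by rewrite [RHS]big_ltn //= add0n; apply: eq_big_nat => i /andP[->].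
  rewrite big_mkord [RHS]big_mkcond /=; apply: eq_bigr => i _; rewrite inE.
  by case: (_ && _).
pose exps (x : 'I_X.+1) : {ffun 'I_k -> 'I_e.+1} := [ffun i : 'I_k => inord (logn i x)].
have -> : e.+1 ^ k = #|{ffun 'I_k -> 'I_e.+1}| by rewrite card_ffun !card_ord.
apply: (@leq_card_in _ _ exps) => x y /andP[x_gt0 sx] /andP[y_gt0 sy] exps_xy.
have [le_x le_y] : x <= 2 ^ e /\ y <= 2 ^ e.
  by split; rewrite -ltnS (leq_trans (ltn_ord _)).
apply/val_inj/eqn_from_log => // p /=; have [p_lt | p_ge] := ltnP p k.
  have := congr1 (fun g : {ffun 'I_k -> 'I_e.+1} => val (g (Ordinal p_lt))) exps_xy.
  rewrite !ffunE /=.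
  by rewrite !inordK // ltnS logn_leq_exp2.
have logn0 z : smooth k z -> logn p z = 0.
  move/allP=> sz; apply/eqP; rewrite -leqn0 leqNgt logn_gt0.
  by apply/negP => /sz; rewrite ltnNge p_ge.
by rewrite !logn0.
Qed.

Lemma sqrn_leq_exp2 j : 4 <= j -> j ^ 2 <= 2 ^ j.
Proof.
elim: j => // j IH; rewrite leq_eqVlt => /orP[/eqP <- // | j_ge].
have le_j := IH j_ge; have : j.+1 ^ 2 <= 2 * j ^ 2 by nia.
by move/leq_trans; apply; rewrite [2 ^ _]expnS leq_mul2l.
Qed.

Lemma exists_4_mul_expn_leq_exp2 k : exists e, k <= e /\ 4 * e.+1 ^ k <= 2 ^ e.
Proof.
set j := k + 4; have le_j := @sqrn_leq_exp2 j (leq_addl _ _).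
exists (2 ^ j); split; first by apply: leq_trans le_j; rewrite /j; nia.
apply: (@leq_trans (2 ^ 2 * (2 ^ j.+1) ^ k)).
  rewrite leq_mul2l /=; have [-> // | k_gt0] := posnP k.
  by rewrite leq_exp2r // expnS; have := expn_gt0 2 j; lia.
rewrite -expnM -expnD leq_exp2l //; apply: leq_trans le_j; rewrite /j; nia.
Qed.

Section SumInvPrimes.
Local Open Scope ring_scope.

(* Erdos: for X = 2^e at most X/4 integers up to X are k-smooth, so the primes
   p >= k satisfy sum X/p >= 3X/4. *)
Lemma sum_inv_primes_ge_half k : exists N, (k <= N)%N /\
  1 / 2 <= \sum_(k <= p < N | prime p) (p%:R : rat)^-1.
Proof.
have [e [le_ke le_e]] := exists_4_mul_expn_leq_exp2 k.
set X := (2 ^ e)%N; have X_gt0 : (0 < X)%N by rewrite expn_gt0.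
exists X.+1; split; first by have := ltn_expl e (isT : (1 < 2)%N); rewrite -/X; lia.
have le_X : (X <= \sum_(k <= p < X.+1 | prime p) X %/ p + e.+1 ^ k)%N.
  by apply: leq_trans (leq_sum_div_primes_smooth k X) _; rewrite leq_add2l sum_smooth_leq.
set S := \sum_(_ <= _ < _ | _) _.
have le_div : \sum_(k <= p < X.+1 | prime p) (X %/ p)%:R <= X%:R * S.
  rewrite mulr_sumr; apply: ler_sum => p /prime_gt0 p_gt0.
  by rewrite ler_pdivlMr ?ltr0n // -natrM ler_nat leq_divM.
move: le_X le_e le_div; rewrite -!(ler_nat rat) natrD natr_sum natrM.
move: (\sum_(_ <= _ < _ | _) _) ((e.+1 ^ k)%:R) => D Y le_X le_e le_div.
have X_ge0 : (0 : rat) <= X%:R by [].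
have : X%:R * (1 / 2) <= X%:R * S by lra.
by rewrite ler_pM2l // ltr0n.
Qed.

Lemma sum_inv_primes_unbounded c k : exists N, (k <= N)%N /\
  c%:R / 2 <= \sum_(k <= p < N | prime p) (p%:R : rat)^-1.
Proof.
elim: c => [|c [N1 [le_kN1 sum_ge]]]; first by exists k; rewrite mul0r big_geq.
have [N2 [le_N12 sum_ge']] := sum_inv_primes_ge_half N1.
exists N2; split; first exact: leq_trans le_kN1 le_N12.
by rewrite (big_cat_nat le_kN1 le_N12) /= -addn1 natrD; lra.
Qed.

Lemma prod_subr_mul_addr_sum_le1 (R : realDomainType) (I : Type) (s : seq I) (F : I -> R) :
    (forall i, 0 <= F i <= 1) ->
  \prod_(i <- s) (1 - F i) * (1 + \sum_(i <- s) F i) <= 1.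
Proof.
move=> F01; elim: s => [|i s IH]; first by rewrite !big_nil; lra.
have [F_ge0 F_le1] := andP (F01 i); rewrite !big_cons.
have B_ge0 : 0 <= \prod_(j <- s) (1 - F j).
  by apply: prodr_ge0 => j _; rewrite subr_ge0; case/andP: (F01 j).
have S_ge0 : 0 <= \sum_(j <- s) F j by apply: sumr_ge0 => j _; case/andP: (F01 j).
move: IH B_ge0 S_ge0 F_ge0 F_le1.
move: (\prod_(_ <- _) _) (\sum_(_ <- _) _) (F i) => B S x IH B_ge0 S_ge0 x_ge0 x_le1.
have B_le1 : B <= 1 by nra.
have : (1 - x) * (B * (1 + S)) <= 1 - x by rewrite ler_piMr // subr_ge0.
have : (1 - x) * x * B <= (1 - x) * x by rewrite ler_piMr // mulr_ge0 // subr_ge0.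
nra.
Qed.

Lemma invn_ge0_le1 (R : numFieldType) n : 0 <= (n%:R : R)^-1 <= 1.
Proof.
rewrite invr_ge0 ler0n /=; have [-> | n_gt0] := posnP n; first by rewrite invr0 ler01.
by rewrite invf_le1 ?ltr0n // ler1n.
Qed.

Lemma exists_primes_prod_predn_lt M k : exists T : seq nat,
  [/\ uniq T, all prime T, all (fun p => k <= p)%N T &
      (M * \prod_(p <- T) p.-1 < \prod_(p <- T) p)%N].
Proof.
have [N [_ sum_ge]] := sum_inv_primes_unbounded (M.+1).*2 k.
set T := [seq p <- index_iota k N | prime p].
have memT p : p \in T -> prime p /\ (k <= p)%N.
  by rewrite mem_filter mem_index_iota => /andP[-> /andP[-> _]].
exists T; split; rewrite ?filter_uniq ?iota_uniq //; try by apply/allP => p /memT[].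
rewrite -big_filter -/T -muln2 natrM mulfK // -addn1 natrD in sum_ge.
set rho := \prod_(p <- T) (1 - (p%:R : rat)^-1).
have le1 := prod_subr_mul_addr_sum_le1 T (fun p => invn_ge0_le1 rat p).
have rho_ge0 : 0 <= rho.
  by apply: prodr_ge0 => p _; rewrite subr_ge0; case/andP: (invn_ge0_le1 rat p).
have M_rho : M%:R * rho < 1.
  move: rho_ge0; rewrite le_eqVlt => /orP[/eqP <- | rho_gt0]; first by rewrite mulr0 ltr01.
  by move: le1 sum_ge; rewrite -/rho; nra.
have prod_gt0 : 0 < \prod_(p <- T) (p%:R : rat).
  by rewrite big_seq; apply: prodr_gt0 => p /memT[/prime_gt0 p_gt0 _]; rewrite ltr0n.
have prod_predn : \prod_(p <- T) (p.-1)%:R = \prod_(p <- T) (p%:R : rat) * rho.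
  rewrite /rho -big_split /= big_seq [RHS]big_seq.
  apply: eq_bigr => p /memT[/prime_gt0 p_gt0 _].
  by rewrite -subn1 natrB // mulrBr mulr1 mulfV // pnatr_eq0 -lt0n.
rewrite -(ltr_nat rat) natrM !natr_prod prod_predn.
by rewrite mulrCA -[X in _ < X]mulr1 ltr_pM2l.
Qed.

End SumInvPrimes.

Lemma mem_primes_prod T p : all prime T -> (p \in primes (\prod_(q <- T) q)) = (p \in T).
Proof.
elim: T => [|q T IH] /=; first by rewrite big_nil.
case/andP=> q_pr T_pr; have prod_gt0 : 0 < \prod_(q <- T) q.
  by rewrite big_seq; apply: prodn_cond_gt0 => q' /(allP T_pr)/prime_gt0.
by rewrite big_cons (primesM _ (prime_gt0 q_pr) prod_gt0) primes_prime // inE IH.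
Qed.

Lemma exists_mul_exp_between P q n : 0 < P -> 1 < q -> P <= n ->
  exists j, n < P * q ^ j.+1 <= q * n.
Proof.
move=> P_gt0 q_gt1 le_Pn.
have : exists j, n < P * q ^ j.
  by exists n; apply: leq_trans (ltn_expl n q_gt1) (leq_pmull _ P_gt0).
case/ex_minnP=> -[|j] lt_n min_j; first by rewrite muln1 ltnNge le_Pn in lt_n.
exists j; rewrite lt_n expnS mulnCA leq_pmul2l ?(ltnW q_gt1) // leqNgt.
by apply/negP => /min_j; rewrite ltnn.
Qed.

Theorem corollary3p1 (r : nat) (hr : 0 < r) :
  forall K : nat, exists N : nat, forall n : nat,
    inF r n -> N < n -> K <= omega n.
Proof.
move=> K; have [q r_lt_q q_pr] := prime_above r.
have [T [uT T_pr T_gt dense]] := exists_primes_prod_predn_lt (q * r.+1 ^ K) r.+1.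
set P := \prod_(p <- T) p in dense.
have P_gt0 : 0 < P.
  by rewrite /P big_seq; apply: prodn_cond_gt0 => p /(allP T_pr)/prime_gt0.
exists (P * q) => n [Bn Fn] lt_n; rewrite leqNgt; apply/negP => /ltnW le_omega.
have le_Pn : P <= n by apply: leq_trans (ltnW lt_n); rewrite leq_pmulr ?prime_gt0.
have [j /andP[lt_nm le_m]] := exists_mul_exp_between P_gt0 (prime_gt1 q_pr) le_Pn.
set m := P * q ^ j.+1 in lt_nm le_m.
have m_gt0 : 0 < m by rewrite muln_gt0 P_gt0 expn_gt0 prime_gt0.
have mem_m p : (p \in primes m) = (p \in T) || (p == q).
  rewrite (primesM _ P_gt0) ?expn_gt0 ?prime_gt0 // primesX //.
  by rewrite (primes_prime q_pr) inE mem_primes_prod.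
have Bm : inB r m.
  split=> //; rewrite Sr_gt0; apply/allP => p.
  by rewrite mem_m => /orP[/(allP T_gt) | /eqP ->].
have := Fn m Bm lt_nm; apply/negP; rewrite -leqNgt ltnW // (Sr_ltn Bn m_gt0 le_m uT) //.
  by move=> p pT; rewrite mem_m pT.
apply: leq_ltn_trans dense; rewrite leq_mul ?leq_mul ?leq_pexp2l //.
by apply: leq_prod => p _; rewrite -subn1 leq_sub2l.
Qed.
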